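(* For each integer $n\ge 3$ and each $Q\in\{Q_n(\mathscr{M}^{KI}_n),Q_n(\mathscr{M}^{KK}_n),Q_n(\mathscr{A}^{KK}_n),Q_n(\mathscr{H}^{KK}_n)\}$ we have $\alpha\text{-}\mathsf{tw}(Q)\le 2$ and $\alpha^{\ast}(Q)\le 3$.
   Context: Let $X^1,\dots,X^k$ be pairwise disjoint ordered sets $X^j=\{x^j_1,\dots,x^j_n\}$, and let $y^1,\dots,y^k,z^1,\dots,z^{k-1}$ be further distinct vertices. For ordered sets $X,Y$ of size $n$: the matching $\mathcal{M}(X,Y)$ has edges $x_iy_i$, the anti-matching $\mathcal{A}(X,Y)$ has edges $x_iy_j$ ($i\ne j$), the half-graph $\mathcal{H}(X,Y)$ has edges $x_iy_j$ ($i\le j$); $K(S)$ is the clique on $S$ and $K(S,T)$ the complete bipartite graph between $S$ and $T$; unions of graphs take the union of vertex and edge sets. Define $Q_k(\mathscr{M}^{KK}_n)=\bigcup_{i\in[k-1]}\mathcal{M}(X^i,X^{i+1})\cup\bigcup_{i\in[k]}K(\{y^i\}\cup X^i)$; $Q_k(\mathscr{M}^{KI}_n)=\bigcup_{i\in[k-1]}\mathcal{M}(X^i,X^{i+1})\cup\bigcup_{i\in[\lceil k/2\rceil]}K(\{y^{2i-1}\}\cup X^{2i-1})$; $Q_k(\mathscr{H}^{KK}_n)=\bigcup_{i\in[k-1]}\mathcal{H}(X^i,X^{i+1})\cup\bigcup_{i\in[k]}K(\{y^i\}\cup X^i)$; $Q_k(\mathscr{A}^{KK}_n)=\bigcup_{i\in[k-1]}\mathcal{A}(X^i,X^{i+1})\cup\bigcup_{i\in[k]}K(\{y^i\}\cup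 X^i)\cup\bigcup_{i\in[k-1]}K(\{z^i\},X^i\cup X^{i+1})$. $\alpha\text{-}\mathsf{tw}$ is the minimum over tree-decompositions of the maximum independence number of a bag, and $\alpha^{\ast}(G)=\max_v\alpha(G[N[v]])$. *)

From mathcomp Require Import all_boot.
From mathcomp Require Import boolp.

Set Implicit Arguments.
Unset Strict Implicit.
Unset Printing Implicit Defensive.

(* Generic graph parameters for a graph on a finite type V with edge   *)
(* relation E (assumed symmetric and irreflexive for our graphs).      *)
Section GraphParams.
Variables (V : finType) (E : rel V).

Definition independent (A : {set V}) : bool :=
  [forall x in A, forall y in A, ~~ E x y].

Definition alpha (S : {set V}) : nat :=
  \max_(A : {set V} | (A \subset S) && independent A) #|A|.

Definition closed_nbhd (v : V) : {set V} := v |: [set u | E v u].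

Definition alpha_star : nat := \max_(v : V) alpha (closed_nbhd v).

Definition is_tree (I : finType) (te : rel I) : Prop :=
  [/\ irreflexive te, symmetric te, 0 < #|I|,
      (forall s t, connect te s t) &
      #|[set p : I * I | te p.1 p.2]| = 2 * (#|I| - 1)].

Definition is_tree_decomposition (I : finType) (te : rel I)
    (B : I -> {set V}) : Prop :=
  [/\ is_tree te,
      (forall v, exists t, v \in B t),
      (forall u v, E u v -> exists t, (u \in B t) && (v \in B t)) &
      (forall v s t, v \in B s -> v \in B t ->
         connect [rel a b | [&& te a b, v \in B a & v \in B b]] s t)].

Definition alpha_width_at_most (k : nat) : Prop :=
  exists (I : finType) (te : rel I) (B : I -> {set V}),
    is_tree_decomposition te B /\ forall t, alpha (B t) <= k.

Lemma alpha_width_trivial : alpha_width_at_most #|V|.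
Proof.
exists unit, [rel _ _ | false], (fun _ => setT); split; last first.
  by move=> _; apply/bigmax_leqP => A _; apply: max_card.
split.
- split => //; first by rewrite card_unit.
  + by move=> [] []; apply: connect0.
  + rewrite card_unit; apply/eqP; rewrite cards_eq0; apply/eqP/setP => p.
    by rewrite !inE.
- by move=> v; exists tt; rewrite inE.
- by move=> u v _; exists tt; rewrite !inE.
- by move=> v [] [] _ _; apply: connect0.
Qed.

Definition alpha_tw : nat :=
  ex_minn (ex_intro (fun k => `[< alpha_width_at_most k >]) #|V|
                    (asboolT alpha_width_trivial)).

End GraphParams.

(* The graphs Q_k(...) with k = n layers X^1..X^k of size n.           *)
(* 0-indexed: inl (inl (j, i)) = x^{j+1}_{i+1},                        *)
(*            inl (inr j)      = y^{j+1},                              *)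
(*            inr j            = z^{j+1}  (only j+1 < k).              *)
Inductive Qkind := MKI | MKK | AKK | HKK.

Definition QV (k n : nat) : finType := (('I_k * 'I_n) + 'I_k + 'I_k)%type.

(* is layer X^{j+1} turned into a clique with y^{j+1}? *)
Definition clique_layer (c : Qkind) (j : nat) : bool :=
  match c with MKI => ~~ odd j | _ => true end.

(* edges between x^{j+1}_{i+1} and x^{j+2}_{i'+1} *)
Definition inter (c : Qkind) (i i' : nat) : bool :=
  match c with
  | MKI | MKK => i == i'
  | AKK => i != i'
  | HKK => i <= i'
  end.

Definition has_z (c : Qkind) : bool := match c with AKK => true | _ => false end.

Definition Qvert (c : Qkind) (k n : nat) (v : QV k n) : bool :=
  match v with
  | inl (inl _) => true
  | inl (inr j) => clique_layer c j
  | inr j => has_z c && (j.+1 < k)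
  end.

Definition Qedge0 (c : Qkind) (k n : nat) (u v : QV k n) : bool :=
  match u, v with
  | inl (inl (j, i)), inl (inl (j', i')) =>
      ((j.+1 == j') && inter c i i')
      || [&& (j == j' :> nat), (i != i') & clique_layer c j]
  | inl (inl (j, _)), inl (inr j') => (j == j') && clique_layer c j
  | inl (inl (j, _)), inr j' =>
      [&& has_z c, (j'.+1 < k) & ((j == j' :> nat) || (j == j'.+1 :> nat))]
  | _, _ => false
  end.

Definition Qedge (c : Qkind) (k n : nat) (u v : QV k n) : bool :=
  Qedge0 c u v || Qedge0 c v u.

Definition Qgraph (c : Qkind) (k n : nat) : finType :=
  {v : QV k n | Qvert c v}.

Definition Qrel (c : Qkind) (k n : nat) : rel (Qgraph c k n) :=
  fun u v => Qedge c (val u) (val v).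

(** Both bounds come from covering sets by few cliques.  For the tree
    decomposition take the path of bags X^a ∪ X^(a+1) ∪ {y^a, z^a}: the two
    layers are cliques (and z^a sees all of X^(a+1)), so every bag is covered
    by two cliques.  For Q_n(M^KI_n) only the odd layers are cliques; there the
    path bags are X^(2b-1) ∪ X^(2b+1) (with y^(2b-1) added), and each matching
    path x^(2b-1)_i x^(2b)_i x^(2b+1)_i through an independent layer hangs off
    it as a leaf bag.  For α*, a closed neighbourhood meets only three
    consecutive layers, and its part in each of them (with y and z added where
    they occur) is a clique. *)

From mathcomp Require Import all_boot.
From mathcomp Require Import boolp.
From mathcomp Require Import zify.

Set Implicit Arguments.
Unset Strict Implicit.
Unset Printing Implicit Defensive.

Section CliqueCover.
Variables (V : finType) (E : rel V).

Lemma alpha_leq_clique_cover (S : {set V}) (m : nat) (f : V -> nat) :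
  {in S, forall v, f v <= m} ->
  {in S &, forall u v, u != v -> f u = f v -> E u v} ->
  alpha E S <= m.+1.
Proof.
move=> f_le f_clique; apply/bigmax_leqP => A /andP[sAS indA].
pose g v : 'I_m.+1 := inord (f v).
have g_inj : {in A &, injective g}.
  move=> u v uA vA /(congr1 (@nat_of_ord _)); rewrite !inordK ?ltnS ?f_le ?(subsetP sAS) //.
  move=> fuv; apply/eqP/negPn/negP => uv.
  have := f_clique u v (subsetP sAS u uA) (subsetP sAS v vA) uv fuv.
  by move/forallP/(_ u)/implyP/(_ uA)/forallP/(_ v)/implyP/(_ vA)/negP: indA.
rewrite -(card_in_imset g_inj) -[X in _ <= X]card_ord; exact: max_card.
Qed.

Lemma alpha_tw_leq (k : nat) : alpha_width_at_most E k -> alpha_tw E <= k.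
Proof. by move=> Ek; rewrite /alpha_tw; case: ex_minnP => m _; apply; apply/asboolP. Qed.

End CliqueCover.

Lemma connect_by_descent (I : finType) (e : rel I) (rk : I -> nat)
    (P : pred I) (t : I) :
  (forall a, P a -> a != t -> exists2 b, e a b & P b && (rk b < rk a)) ->
  forall a, P a -> connect e a t.
Proof.
move=> step a; elim: (rk a).+1 {-2}a (ltnSn (rk a)) => // m IH {}a rka Pa.
have [-> | neq] := eqVneq a t; first exact: connect0.
have [b eab /andP[Pb rkb]] := step a Pa neq.
exact: connect_trans (connect1 eab) (IH b (leq_trans rkb rka) Pb).
Qed.

Section ParentTree.
Variables (I : finType) (parent : I -> option I) (rk : I -> nat) (root : I).
Hypotheses (parent_root : parent root = None)
  (parent_nonroot : forall a, a != root -> parent a != None)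
  (rk_parent : forall a b, parent a = Some b -> rk b < rk a).

Definition parent_rel : rel I :=
  fun a b => (parent a == Some b) || (parent b == Some a).

Lemma parent_rel_sym : symmetric parent_rel.
Proof. by move=> a b; rewrite /parent_rel orbC. Qed.

Lemma card_parent_rel : #|[set p : I * I | parent_rel p.1 p.2]| = 2 * (#|I| - 1).
Proof.
pose up := [set p : I * I | parent p.1 == Some p.2].
pose swap (p : I * I) := (p.2, p.1).
have swapK : involutive swap by case.
have -> : [set p : I * I | parent_rel p.1 p.2] = up :|: swap @: up.
  apply/setP => -[a b]; rewrite !inE /parent_rel /=; congr (_ || _).
  apply/eqP/imsetP => [ba | [[x y]]]; last by rewrite inE /= => /eqP ? [-> ->].
  by exists (b, a); rewrite ?inE /= ?ba.
have disj : up :&: swap @: up = set0.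
  apply/setP => -[a b]; rewrite !inE /=; apply/negP.
  case/andP=> /eqP ab /imsetP[[x y]]; rewrite inE /= => /eqP xy [ex ey]; subst.
  by have := rk_parent ab; have := rk_parent xy; lia.
rewrite cardsU disj cards0 subn0 card_imset; last exact: inv_inj swapK.
suff -> : #|up| = #|I| - 1 by rewrite mul2n addnn.
pose to_parent a := (a, odflt a (parent a)).
have -> : up = to_parent @: [set~ root].
  apply/setP => -[a b]; rewrite inE /=; apply/eqP/imsetP => [ab | [x]].
    exists a; last by rewrite /to_parent ab.
    by rewrite !inE; apply: contra_eqN ab => /eqP ->; rewrite parent_root.
  by rewrite !inE => /parent_nonroot; case px: (parent x) => [y|] // _ [-> ->]; rewrite px.
by rewrite card_imset ?cardsC1 ?subn1 // => x y [].
Qed.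

Lemma parent_rel_tree : is_tree parent_rel.
Proof.
have connect_root a : connect parent_rel a root.
  apply: (@connect_by_descent _ _ rk predT) => // {}a _ /parent_nonroot.
  case pa: (parent a) => [b|] // _; exists b; last by rewrite rk_parent.
  by rewrite /parent_rel pa eqxx.
split; last exact: card_parent_rel.
- move=> a; rewrite /parent_rel orbb; apply/negP => /eqP /rk_parent.
  by rewrite ltnn.
- exact: parent_rel_sym.
- by apply/card_gt0P; exists root.
- move=> s t; apply: connect_trans (connect_root s) _.
  by rewrite (sym_connect_sym parent_rel_sym) connect_root.
Qed.

Variables (V : finType) (E : rel V) (B : I -> {set V}) (home : V -> I).
Hypotheses (in_home : forall v, v \in B (home v))
  (edge_in_bag : forall u v, E u v -> exists t, (u \in B t) && (v \in B t))
  (in_parent : forall v t, v \in B t -> t != home v ->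
     exists2 p, parent t = Some p & v \in B p).

Lemma parent_rel_tree_decomposition : is_tree_decomposition E parent_rel B.
Proof.
split=> [|v|//|v]; [exact: parent_rel_tree | by exists (home v) |].
set e := [rel a b | _].
have e_sym : symmetric e.
  by move=> a b; rewrite /e /= parent_rel_sym; case: (parent_rel _ _); rewrite //= andbC.
have connect_home t : v \in B t -> connect e t (home v).
  apply: (@connect_by_descent _ _ rk (fun t => v \in B t)) => {}t vt /(in_parent vt).
  case=> p tp vp; exists p; last by rewrite vp rk_parent.
  by rewrite /e /= /parent_rel tp eqxx vt vp.
move=> s t vs vt; apply: connect_trans (connect_home s vs) _.
by rewrite (sym_connect_sym e_sym) connect_home.
Qed.

End ParentTree.

Lemma odd_modn2 (x : nat) : odd x = (x %% 2 == 1).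
Proof. by rewrite modn2; case: odd. Qed.

Lemma eq_ord_val (m : nat) (x y : 'I_m) : (x == y) = (x == y :> nat).
Proof. by []. Qed.

Lemma inl_eq (A B : eqType) (x y : A) : (@inl A B x == inl y) = (x == y).
Proof. by []. Qed.

Lemma inr_eq (A B : eqType) (x y : B) : (@inr A B x == inr y) = (x == y).
Proof. by []. Qed.

Lemma inl_inr_eq (A B : eqType) (x : A) (y : B) : (inl x == inr y) = false.
Proof. by []. Qed.

Lemma inr_inl_eq (A B : eqType) (x : A) (y : B) : (inr y == inl x) = false.
Proof. by []. Qed.

Definition ord_subn (m : nat) (j : 'I_m) (d : nat) : 'I_m :=
  Ordinal (leq_ltn_trans (leq_subr d j) (ltn_ord j)).

Lemma ord_subnE (m : nat) (j : 'I_m) (d : nat) : val (ord_subn j d) = j - d.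
Proof. by []. Qed.

Ltac qsimpl := rewrite /= ?inl_eq ?inr_eq ?inl_inr_eq ?inr_inl_eq ?xpair_eqE
  ?eq_ord_val ?ord_subnE ?odd_modn2 /=.

Ltac qsplit := repeat match goal with
  | H : is_true (_ && _) |- _ => case/andP: H => ? ?
  | H : is_true (_ || _) |- _ => case/orP: H => ?
  | H : is_true (?x == ?y) |- _ => move/eqP: H => H; try subst x; try subst y
  | H : _ = false |- _ => move/negbT: H => H
  | H : is_true true |- _ => clear H
  end.

Ltac qarith := qsimpl; move=> *; qsplit; try done; lia.

(* [inl a] is the a-th node of a path (rooted at [inl 0]), [inr (a, i)] a leaf
   attached to it; leaves carry nonempty bags only for Q_n(M^KI_n), a odd. *)
Definition qnode (n : nat) := ('I_n + 'I_n * 'I_n)%type.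

Definition qparent (n : nat) (t : qnode n) : option (qnode n) :=
  match t with
  | inl a => if val a == 0 then None else Some (inl (ord_subn a 1))
  | inr (a, _) => Some (inl a)
  end.

Definition qdepth (n : nat) (t : qnode n) : nat :=
  match t with inl a => val a | inr (a, _) => (val a).+1 end.

(* Layers are 0-indexed: the clique layers of Q_n(M^KI_n) are the even ones. *)
Definition qbag (n : nat) (c : Qkind) (t : qnode n) (v : QV n n) : bool :=
  match t, v with
  | inl a, inl (inl (j, _)) =>
      if c is MKI then (j == a %/ 2 * 2 :> nat) || (j == a %/ 2 * 2 + 2 :> nat)
      else (j == a :> nat) || (j == a.+1 :> nat)
  | inl a, inl (inr j) => j == a :> nat
  | inl a, inr j => j == a :> nat
  | inr (a, i), inl (inl (j, i')) =>
      if c is MKI then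
        [&& a %% 2 == 1, i' == i :> nat & (j.+1 == a) || (j == a :> nat) || (j == a.+1 :> nat)]
      else false
  | _, _ => false
  end.

Definition qhome (n : nat) (c : Qkind) (v : QV n n) : qnode n :=
  match v with
  | inl (inl (j, i)) =>
      if c is MKI then (if odd j then inr (j, i) else inl (ord_subn j 2))
      else inl (ord_subn j 1)
  | inl (inr j) | inr j => inl j
  end.

Definition qedge_node (n : nat) (c : Qkind) (u v : QV n n) : qnode n :=
  match u, v with
  | inl (inl (j, i)), inl (inl (j', i')) =>
      if c is MKI then
        (if j == j' :> nat then inl j else if odd j then inr (j, i) else inr (j', i'))
      else inl (if j <= j' then j else j')
  | inl (inl _), inl (inr j) | inl (inl _), inr j | inl (inr j), _ | inr j, _ => inl j
  end.

Definition qbag_colour (n : nat) (c : Qkind) (t : qnode n) (v : QV n n) : nat :=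
  match t, v with
  | inl a, inl (inl (j, _)) =>
      if c is MKI then (if j == a %/ 2 * 2 :> nat then 0 else 1)
      else (if j == a :> nat then 0 else 1)
  | inl _, inr _ => 1
  | inr (a, _), inl (inl (j, _)) => if j == a.+1 :> nat then 1 else 0
  | _, _ => 0
  end.

Lemma qbag_qhome (n : nat) (c : Qkind) (v : QV n n) : Qvert c v -> qbag c (qhome c v) v.
Proof.
by case: c; case: v => [[[j i]|j]|j] /=; repeat case: ifP; qarith.
Qed.

Lemma qbag_parent (n : nat) (c : Qkind) (v : QV n n) (t : qnode n) :
  Qvert c v -> qbag c t v -> t != qhome c v ->
  exists2 p, qparent t = Some p & qbag c p v.
Proof.
move=> Hv vt tv; suff : if qparent t is Some p then qbag c p v else false.
  by case: (qparent t) => [p|] //; exists p.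
move: Hv vt tv.
by case: c; case: t => [a|[a i]]; case: v => [[[j i']|j]|j] /=; repeat case: ifP; qarith.
Qed.

Lemma qedge_in_bag (n : nat) (c : Qkind) (u v : QV n n) :
  Qvert c u -> Qvert c v -> Qedge c u v ->
  exists t, qbag c t u && qbag c t v.
Proof.
move=> Hu Hv Euv; exists (qedge_node c u v); move: Hu Hv Euv; rewrite /Qedge.
by case: c; case: u => [[[j i]|j]|j]; case: v => [[[j' i']|j']|j'] /=;
  repeat case: ifP; qarith.
Qed.

Lemma qbag_colour_leq1 (n : nat) (c : Qkind) (t : qnode n) (v : QV n n) :
  qbag_colour c t v <= 1.
Proof. by case: c; case: t => [a|[a i]]; case: v => [[[j i']|j]|j] /=; repeat case: ifP. Qed.

Lemma qbag_colour_clique (n : nat) (c : Qkind) (t : qnode n) (u v : QV n n) :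
  Qvert c u -> Qvert c v -> qbag c t u -> qbag c t v ->
  u != v -> qbag_colour c t u = qbag_colour c t v -> Qedge c u v.
Proof.
rewrite /Qedge.
by case: c; case: t => [a|[a i0]]; case: u => [[[j i]|j]|j]; case: v => [[[j' i']|j']|j'] /=;
  repeat case: ifP; qarith.
Qed.

Definition layer (n : nat) (v : QV n n) : nat :=
  match v with inl (inl (j, _)) | inl (inr j) | inr j => j end.

(* z^j joins the clique in layer j when the centre lies in layer j + 1, and
   the clique in layer j + 1 otherwise. *)
Definition nbhd_colour (n : nat) (l : nat) (v : QV n n) : nat :=
  match v with
  | inl (inl (j, _)) => if j.+1 == l then 0 else if j == l :> nat then 1 else 2
  | inl (inr _) => 1
  | inr j => if j.+1 == l then 0 else 2
  end.

Lemma nbhd_colour_leq2 (n l : nat) (v : QV n n) : nbhd_colour l v <= 2.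
Proof. by case: v => [[[j i]|j]|j] /=; repeat case: ifP. Qed.

Lemma nbhd_colour_clique (n : nat) (c : Qkind) (w u v : QV n n) :
  Qvert c w -> Qvert c u -> Qvert c v ->
  (u == w) || Qedge c w u -> (v == w) || Qedge c w v ->
  u != v -> nbhd_colour (layer w) u = nbhd_colour (layer w) v -> Qedge c u v.
Proof.
rewrite /Qedge.
case: c; case: w => [[[[a ha] [b hb]]|[a ha]]|[a ha]];
  case: u => [[[[j hj] [i hi]]|[j hj]]|[j hj]];
  case: v => [[[[j' hj'] [i' hi']]|[j' hj']]|[j' hj']] /=.
all: by repeat case: ifP; qarith.
Qed.

Lemma Q_alpha_width_at_most_2 (n : nat) (c : Qkind) : 0 < n ->
  alpha_width_at_most (@Qrel c n n) 2.
Proof.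
move=> n_gt0; pose B t := [set v : Qgraph c n n | qbag c t (val v)].
exists (qnode n), (parent_rel (@qparent n)), B; split; last first.
  move=> t; apply: (@alpha_leq_clique_cover _ _ _ 1 (fun v => qbag_colour c t (val v))).
    by move=> v _; apply: qbag_colour_leq1.
  by move=> u v; rewrite !inE => ut vt; apply: qbag_colour_clique ut vt; apply: valP.
apply: (@parent_rel_tree_decomposition _ _ (@qdepth n) (inl (Ordinal n_gt0))
  _ _ _ _ _ _ (fun v => qhome c (val v))).
- by [].
- move=> [a|[a i]] //=; case: ifP => // a0; rewrite inl_eq eq_ord_val /=; lia.
- move=> [a|[a i]] b /=; last by case=> <-.
  by case: ifP => // a0 [<-] /=; lia.
- by move=> v; rewrite inE qbag_qhome ?(valP v).
- move=> u v uv; have [t uvt] := qedge_in_bag (valP u) (valP v) uv.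
  by exists t; rewrite !inE.
- move=> v t; rewrite inE => vt /(qbag_parent (valP v) vt)[p tp vp].
  by exists p; rewrite ?inE.
Qed.

Lemma Q_alpha_star_leq3 (n : nat) (c : Qkind) : alpha_star (@Qrel c n n) <= 3.
Proof.
apply/bigmax_leqP => w _.
apply: (@alpha_leq_clique_cover _ _ _ 2 (fun v => nbhd_colour (layer (val w)) (val v))).
  by move=> v _; apply: nbhd_colour_leq2.
move=> u v; rewrite /closed_nbhd !inE => uw vw.
by apply: nbhd_colour_clique uw vw; exact: valP.
Qed.

Unset Implicit Arguments.

Theorem lemma8p5 (n : nat) : 3 <= n ->
  forall c : Qkind,
    alpha_tw (@Qrel c n n) <= 2 /\ alpha_star (@Qrel c n n) <= 3.
Proof.
move=> n_ge3 c; split; last exact: Q_alpha_star_leq3.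
by apply/alpha_tw_leq/Q_alpha_width_at_most_2; lia.
Qed.
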